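(* For any graph function $\alpha$ on a strongly connected digraph $G$, we have $\rho^R/2\le h$, where $\rho^R=\max_v\rho^R_v$ and $h=\max_v y_v-\min_v y_v$.
   Context: $G$ is a strongly connected directed graph on vertex set $\{1,\dots,n\}$ (self-loops allowed); a graph function assigns a real weight $\alpha_{uv}$ to each edge. $\alpha_v^{\text{in}}=\max_{u:(u,v)\in G}\alpha_{uv}$, $\alpha_v^{\text{out}}=\max_{w:(v,w)\in G}\alpha_{vw}$, $\rho^R_v=\max\{0,\alpha_v^{\text{out}}-\alpha_v^{\text{in}}\}$. A raising operation at $v$: if $\rho^R_v>0$ add $\rho^R_v/2$ to each incoming edge weight $\alpha_{uv}$ ($u\ne v$) and subtract it from each outgoing $\alpha_{vw}$ ($w\neq v$); otherwise do nothing. Starting from $\alpha$, for any infinite sequence of raising operations in which every vertex occurs infinitely often, the cumulative amount $r_v(t)$ by which each vertex has been raised (sum of the increments $\rho^R_v/2$ over operations at $v$) converges to a limit vector $r^*$ that does not depend on the sequence. The heights are $y_v=-r^*_v$. *)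

From HB Require Import structures.
From mathcomp Require Import all_boot all_order all_algebra.
From mathcomp Require Import all_classical all_reals all_analysis.
Set Implicit Arguments. Unset Strict Implicit. Unset Printing Implicit Defensive.
Import Order.TTheory GRing.Theory Num.Theory.
Local Open Scope ring_scope.

Section Raising.
Variable R : realType.
Variable n : nat.
(* Directed graph on vertices 'I_n (= {1..n} shifted); E u v means (u,v) is an edge. *)
Variable E : rel 'I_n.

(* maximum / minimum of a finite list of reals; 0 by convention if empty *)
Definition maxs (s : seq R) : R :=
  match s with [::] => 0 | x :: s' => foldr Num.max x s' end.
Definition mins (s : seq R) : R :=
  match s with [::] => 0 | x :: s' => foldr Num.min x s' end.

(* a graph function: weight alpha u v on edge (u,v) (values off edges are irrelevant) *)
Definition alpha_in (alpha : 'I_n -> 'I_n -> R) (v : 'I_n) : R :=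
  maxs [seq alpha u v | u <- enum 'I_n & E u v].
Definition alpha_out (alpha : 'I_n -> 'I_n -> R) (v : 'I_n) : R :=
  maxs [seq alpha v w | w <- enum 'I_n & E v w].
Definition rhoR (alpha : 'I_n -> 'I_n -> R) (v : 'I_n) : R :=
  Num.max 0 (alpha_out alpha v - alpha_in alpha v).

Definition raise (alpha : 'I_n -> 'I_n -> R) (v : 'I_n) : 'I_n -> 'I_n -> R :=
  fun a b =>
    if E a b then
      if (b == v) && (a != v) then alpha a b + rhoR alpha v / 2
      else if (a == v) && (b != v) then alpha a b - rhoR alpha v / 2
      else alpha a b
    else alpha a b.

Fixpoint alpha_at (alpha : 'I_n -> 'I_n -> R) (s : nat -> 'I_n) (t : nat)
  : 'I_n -> 'I_n -> R :=
  match t with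
  | 0 => alpha
  | t'.+1 => raise (alpha_at alpha s t') (s t')
  end.

Definition rcum (alpha : 'I_n -> 'I_n -> R) (s : nat -> 'I_n) (t : nat) (v : 'I_n) : R :=
  \sum_(k < t | s k == v) rhoR (alpha_at alpha s k) v / 2.

End Raising.

Definition strongly_connected (n : nat) (E : rel 'I_n) : Prop :=
  forall u v : 'I_n, connect E u v.

Definition fair (n : nat) (s : nat -> 'I_n) : Prop :=
  forall (v : 'I_n) (N : nat), exists k : nat, (N <= k)%N /\ s k = v.

(* Along any raising sequence the graph function stays a potential reweighting of [alpha]: on
   every edge (a, b) with a <> b, alpha_t(a, b) = alpha(a, b) + r_b(t) - r_a(t).  Let beta be
   the reweighting by the limit r*.  Fairness and convergence make the increments rho^R_v / 2
   performed at v tend to 0, and rho^R_v moves by at most 2d when every edge weight moves by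
   at most d, so rho^R_v(beta) <= 0 for all v.  Since beta and alpha differ on each edge by
   r*_b - r*_a, which is at most h in absolute value, rho^R_v(alpha) <= 2h. *)
From HB Require Import structures.
From mathcomp Require Import all_boot all_order all_algebra.
From mathcomp Require Import all_classical all_reals all_analysis.
From mathcomp Require Import ring lra.
Set Implicit Arguments. Unset Strict Implicit. Unset Printing Implicit Defensive.
Import Order.TTheory GRing.Theory Num.Theory numFieldNormedType.Exports.
Local Open Scope classical_set_scope.
Local Open Scope ring_scope.

Section MaxsMins.
Variable R : realType.

Lemma foldr_max_ub (a : R) s x : x \in a :: s -> x <= foldr Num.max a s.
Proof.
elim: s => [|b s IH] /=; first by rewrite inE => /eqP ->.
move=> xin; rewrite le_max; case: (eqVneq x b) => [->|xb]; first by rewrite lexx.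
by rewrite IH ?orbT //; move: xin; rewrite !inE (negbTE xb) orFb.
Qed.

Lemma foldr_min_lb (a : R) s x : x \in a :: s -> foldr Num.min a s <= x.
Proof.
elim: s => [|b s IH] /=; first by rewrite inE => /eqP ->.
move=> xin; rewrite ge_min; case: (eqVneq x b) => [->|xb]; first by rewrite lexx.
by rewrite IH ?orbT //; move: xin; rewrite !inE (negbTE xb) orFb.
Qed.

Lemma maxs_ge (s : seq R) x : x \in s -> x <= maxs s.
Proof. by case: s => // a s; apply: foldr_max_ub. Qed.

Lemma mins_le (s : seq R) x : x \in s -> mins s <= x.
Proof. by case: s => // a s; apply: foldr_min_lb. Qed.

Lemma maxs_le (s : seq R) b :
  s != [::] -> (forall x, x \in s -> x <= b) -> maxs s <= b.
Proof.
case: s => // a s _ sb /=.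
elim: s sb => [|c s IH] sb /=; first exact/sb/mem_head.
rewrite ge_max sb ?inE ?eqxx ?orbT //= IH // => x xs; apply: sb.
by move: xs; rewrite !inE => /orP [-> | ->]; rewrite ?orbT.
Qed.

Lemma maxs_map_leD (T : eqType) (s : seq T) (f g : T -> R) d : 0 <= d ->
  (forall i, i \in s -> f i <= g i + d) -> maxs (map f s) <= maxs (map g s) + d.
Proof.
case: s => [|a s] d0 fg; first by rewrite /= add0r.
apply: maxs_le => // _ /mapP [i iS ->].
by apply: le_trans (fg i iS) _; rewrite lerD2r maxs_ge ?map_f.
Qed.

End MaxsMins.

Section Reweighting.
Variable R : realType.
Variable n : nat.
Variable E : rel 'I_n.

Lemma rhoR_le_shift (alpha beta : 'I_n -> 'I_n -> R) d v :
  0 <= d -> (forall a b, E a b -> `|alpha a b - beta a b| <= d) ->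
  rhoR E alpha v <= rhoR E beta v + 2 * d.
Proof.
move=> d0 close.
have out_le : alpha_out E alpha v <= alpha_out E beta v + d.
  apply: maxs_map_leD => // w; rewrite mem_filter => /andP [/close + _].
  by rewrite ler_norml; lra.
have in_ge : alpha_in E beta v <= alpha_in E alpha v + d.
  apply: maxs_map_leD => // u; rewrite mem_filter => /andP [/close + _].
  by rewrite ler_norml; lra.
rewrite /rhoR; set x := _ - alpha_in E beta v.
have x_le : x <= Num.max 0 x by rewrite le_max lexx orbT.
have ge0 : 0 <= Num.max 0 x by rewrite le_max lexx.
by rewrite ge_max; apply/andP; split; rewrite /x in x_le; lra.
Qed.

(* Self-loops are never modified by a raising operation, hence the [a != b] guard. *)
Definition reweight (alpha : 'I_n -> 'I_n -> R) (r : 'I_n -> R) a b : R :=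
  alpha a b + (if E a b && (a != b) then r b - r a else 0).

Lemma reweight0 alpha a b : reweight alpha (fun=> 0) a b = alpha a b.
Proof. by rewrite /reweight subr0 if_same addr0. Qed.

Lemma reweight_close alpha (r r' : 'I_n -> R) d : 0 <= d ->
  (forall a b, `|(r b - r' b) - (r a - r' a)| <= d) ->
  forall a b, `|reweight alpha r a b - reweight alpha r' a b| <= d.
Proof.
move=> d0 rr' a b; rewrite /reweight.
case: (E a b && (a != b)); last by rewrite subrr normr0.
suff -> : alpha a b + (r b - r a) - (alpha a b + (r' b - r' a)) =
          (r b - r' b) - (r a - r' a) by [].
by ring.
Qed.

Variables (alpha : 'I_n -> 'I_n -> R) (s : nat -> 'I_n).

Lemma rcumS t v : rcum E alpha s t.+1 v =
  rcum E alpha s t v + (if s t == v then rhoR E (alpha_at E alpha s t) v / 2 else 0).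
Proof. by rewrite /rcum big_mkcond /= big_ord_recr /= -big_mkcond. Qed.

Lemma alpha_at_reweight t a b :
  alpha_at E alpha s t a b = reweight alpha (rcum E alpha s t) a b.
Proof.
rewrite /reweight; elim: t => [|t IH].
  by rewrite /rcum !big_ord0 subrr; case: ifP; rewrite addr0.
rewrite /= /raise !rcumS IH.
case Eab: (E a b) => /=; last by rewrite addr0.
set rho := rhoR E _ (s t).
case: (eqVneq a b) => [<-|ab] /=.
  by rewrite andbN; case: (a == s t); rewrite /= ?andbF ?andbT ?addr0 //; lra.
case: (eqVneq b (s t)) => [bv|bv] /=; case: (eqVneq a (s t)) => [av|av] /=.
- by rewrite -bv in av; rewrite av eqxx in ab.
- by rewrite /rho -bv; lra.
- by rewrite /rho -av; lra.
- lra.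
Qed.

Variable rstar : 'I_n -> R.
Hypothesis s_fair : fair s.
Hypothesis rcum_cvg : forall v, (fun t => rcum E alpha s t v) @ \oo --> rstar v.

Lemma rhoR_reweight_limit_le0 v : rhoR E (reweight alpha rstar) v <= 0.
Proof.
apply/ler_addgt0Pr => e e0; rewrite add0r.
have e8_gt0 : 0 < e / 8 by rewrite divr_gt0.
have [N _ nearN] : \forall t \near \oo, forall u, `|rstar u - rcum E alpha s t u| < e / 8.
  by apply: filter_forall => u; move/cvgrPdist_lt: (@rcum_cvg u) => /(_ _ e8_gt0).
have [k [Nk skv]] := s_fair v N.
have near_k := nearN k Nk; have near_k1 := nearN k.+1 (leqW Nk).
have step_small : rhoR E (alpha_at E alpha s k) v < e / 2.
  have := near_k v; have := near_k1 v.
  by rewrite rcumS skv eqxx !ltr_norml; lra.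
have shift : rhoR E (reweight alpha rstar) v <=
             rhoR E (alpha_at E alpha s k) v + 2 * (e / 4).
  apply: rhoR_le_shift => [|a b _]; first lra.
  rewrite alpha_at_reweight; apply: reweight_close => [|a' b']; first lra.
  by have := near_k a'; have := near_k b'; rewrite ler_norml !ltr_norml; lra.
lra.
Qed.

End Reweighting.

Theorem proposition2 (R : realType) (n : nat) (E : rel 'I_n)
  (alpha : 'I_n -> 'I_n -> R) (s : nat -> 'I_n) (rstar : 'I_n -> R) :
  strongly_connected E ->
  fair s ->
  (forall v : 'I_n, (fun t : nat => rcum E alpha s t v) @ \oo --> (rstar v)) ->
  let y := fun v : 'I_n => - rstar v in
  maxs [seq rhoR E alpha v | v <- enum 'I_n] / 2 <=
    maxs [seq y v | v <- enum 'I_n] - mins [seq y v | v <- enum 'I_n].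
Proof.
move=> _ s_fair rcum_cvg; cbv zeta; set y := fun v => - rstar v; set h := _ - _.
have spread u w : rstar w - rstar u <= h.
  have := maxs_ge (map_f y (mem_enum 'I_n u)).
  by have := mins_le (map_f y (mem_enum 'I_n w)); rewrite /h /y; lra.
case En: (enum 'I_n) => [|v0 vs]; first by rewrite /h En /= mul0r subrr.
have h_ge0 : 0 <= h by have := spread v0 v0; rewrite subrr.
rewrite ler_pdivrMr //; apply: maxs_le => // x; rewrite -En => /mapP [v _ ->].
have := rhoR_reweight_limit_le0 s_fair rcum_cvg v.
suff : rhoR E alpha v <= rhoR E (reweight E alpha rstar) v + 2 * h by lra.
apply: rhoR_le_shift => // a b _.
rewrite -{1}(reweight0 E alpha a b) distrC.
apply: reweight_close => // a' b'; rewrite !subr0 ler_norml.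
by have := spread a' b'; have := spread b' a'; lra.
Qed.
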